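(* In the setting described in the context, for all $k\ge0$: if $u_{k-1}(s)>0$ for all states $s\in S\setminus W_2$, then for all player-2 strategies $\pi_2$ we have $\Pr_s^{\overline{\eta}_k,\pi_2}(\mathrm{Reach}(T\cup W_2))=1$ for all $s\in S$.
   Context: Concurrent game structure $G=(S,M,\Gamma_1,\Gamma_2,\delta)$: finite states, finite moves, nonempty move sets $\Gamma_i(s)$, $\delta(s,a_1,a_2)\in\mathrm{Distr}(S)$ (simultaneous independent moves). Selectors assign to each state a distribution on available moves; $\overline{\xi}$ is the memoryless strategy playing $\xi$ forever; $\Pr_s^{\pi_1,\pi_2}$ is the induced measure on plays from $s$; $\mathrm{Reach}(X)$ is the set of plays visiting $X$. For a valuation $v:S\to[0,1]$: $\mathrm{Pre}_{\xi_1,\xi_2}(v)(s)=\sum_{a,b}\sum_tv(t)\delta(s,a,b)(t)\xi_1(s)(a)\xi_2(s)(b)$, $\mathrm{Pre}_{1:\xi_1}(v)(s)=\inf_{\xi_2}\mathrm{Pre}_{\xi_1,\xi_2}(v)(s)$, $\mathrm{Pre}_1(v)(s)=\sup_{\xi_1}\mathrm{Pre}_{1:\xi_1}(v)(s)$. Fix $T\subseteq S$; $W_2=\{s:\sup_{\pi_1}\inf_{\pi_2}\Pr_s^{\pi_1,\pi_2}(\mathrm{Reach}(T))=0\}$; all states of $T\cup W_2$ are assumed absorbing. Value iteration: $u_0=[T]$ (indicator of $T$), $u_{k+1}=\mathrm{Pre}_1(u_k)$. For each $j\ge1$ fix a player-1 selector $\zeta_j$ with $\mathrm{Pre}_{1:\zeta_j}(u_{j-1})=\mathrm{Pre}_1(u_{j-1})$.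 Entry time $\ell_k(s)=\min\{j\le k:u_j(s)=u_k(s)\}$. Selector $\eta_k$: $\eta_k(s)=\zeta_{\ell_k(s)}(s)$ if $\ell_k(s)>0$, and $\eta_k(s)$ uniform on $\Gamma_1(s)$ if $\ell_k(s)=0$. *)

From HB Require Import structures.
From mathcomp Require Import all_boot all_order all_algebra.
From mathcomp Require Import boolp classical_sets reals.
Set Implicit Arguments. Unset Strict Implicit. Unset Printing Implicit Defensive.
Import Order.TTheory GRing.Theory Num.Theory.
Local Open Scope ring_scope.

Section ConcurrentGame.
Variables (R : realType) (S M : finType).

Definition is_distr (T : finType) (p : T -> R) :=
  (forall x, 0 <= p x) /\ \sum_(x : T) p x = 1.

Definition is_selector (G : S -> {set M}) (xi : S -> M -> R) :=
  forall s, is_distr (xi s) /\ (forall a, a \notin G s -> xi s a = 0).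

(* (History-dependent, randomized) strategies.  A history is a nonempty
   sequence of states s :: h; its current state is [last s h]. *)
Definition strategy := S -> seq S -> M -> R.

Definition is_strategy (G : S -> {set M}) (pi : strategy) :=
  forall s h, is_distr (pi s h) /\ (forall a, a \notin G (last s h) -> pi s h a = 0).

Definition memoryless (xi : S -> M -> R) : strategy := fun s h => xi (last s h).

Variable delta : S -> M -> M -> S -> R.

Definition step (pi1 pi2 : strategy) (s : S) (h : seq S) (t : S) : R :=
  \sum_(a : M) \sum_(b : M) pi1 s h a * pi2 s h b * delta (last s h) a b t.

(* Probability (measure of the union of the corresponding cylinders) that a play
   extending the history s :: h visits X within n further steps (counting the
   current state). *)
Fixpoint reach_within (n : nat) (pi1 pi2 : strategy) (X : pred S)
    (s : S) (h : seq S) : R :=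
  if X (last s h) then 1 else
  match n with
  | 0 => 0
  | n'.+1 => \sum_(t : S) step pi1 pi2 s h t * reach_within n' pi1 pi2 X s (rcons h t)
  end.

(* Pr_s^{pi1,pi2}(Reach X): by countable additivity/continuity of the play
   measure, the supremum (= limit) of the finite-horizon reach probabilities. *)
Definition PrReach (pi1 pi2 : strategy) (X : pred S) (s : S) : R :=
  sup (range (fun n => reach_within n pi1 pi2 X s [::])).

Definition Pre (xi1 xi2 : S -> M -> R) (v : S -> R) (s : S) : R :=
  \sum_(a : M) \sum_(b : M) \sum_(t : S) v t * delta s a b t * xi1 s a * xi2 s b.

Variables (G1 G2 : S -> {set M}).

Definition Pre1_with (xi1 : S -> M -> R) (v : S -> R) (s : S) : R :=
  inf ((fun xi2 => Pre xi1 xi2 v s) @` [set xi2 | is_selector G2 xi2]).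

Definition Pre1 (v : S -> R) (s : S) : R :=
  sup ((fun xi1 => Pre1_with xi1 v s) @` [set xi1 | is_selector G1 xi1]).

Variable T : {set S}.

Definition val1 (s : S) : R :=
  sup ((fun pi1 => inf ((fun pi2 => PrReach pi1 pi2 (fun t => t \in T) s)
                          @` [set pi2 | is_strategy G2 pi2]))
       @` [set pi1 | is_strategy G1 pi1]).

Definition W2 : pred S := fun s => val1 s == 0.

Definition TW2 : pred S := fun s => (s \in T) || W2 s.

Fixpoint u (k : nat) : S -> R :=
  match k with
  | 0 => fun s => if s \in T then 1 else 0
  | k'.+1 => Pre1 (u k')
  end.

Definition ell (k : nat) (s : S) : nat :=
  find (fun j => u j s == u k s) (iota 0 k.+1).

Definition uniform_sel (G : S -> {set M}) : S -> M -> R :=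
  fun s a => if a \in G s then (#|G s|%:R)^-1 else 0.

Variable zeta : nat -> S -> M -> R.

Definition eta_sel (k : nat) : S -> M -> R :=
  fun s => if (0 < ell k s)%N then zeta (ell k s) s else uniform_sel G1 s.

End ConcurrentGame.

From HB Require Import structures.
From mathcomp Require Import all_boot all_order all_algebra.
From mathcomp Require Import boolp classical_sets reals.
From mathcomp Require Import ring lra.
Set Implicit Arguments. Unset Strict Implicit. Unset Printing Implicit Defensive.
Import Order.TTheory GRing.Theory Num.Theory.
Local Open Scope ring_scope.

(* Order the states outside T and W2 by a larger value u_k, and then by an
   earlier entry time l_k.  At such a state x, with j = l_k x > 0, the selector
   eta_k x = zeta_j x guarantees against every move b of player 2 that
   u_k x = u_j x <= E[u_(j-1) (next state)], while every state t that is not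
   strictly better than x has u_(j-1) t < u_k x.  So the next state is strictly
   better with positive probability, bounded below by some q > 0 because there
   are finitely many pairs (x, b).  A rank of height |S| + 1 (0 on T and W2)
   thus decreases with probability at least q at every step, and T and W2 are
   avoided for m (|S| + 1) steps with probability at most (1 - q^(|S|+1))^m. *)

Lemma bernoulli_le1 (R : realFieldType) (p : R) m :
  0 <= p <= 1 -> (1 - p) ^+ m * (1 + m%:R * p) <= 1.
Proof.
case/andP=> p_ge0 p_le1; elim: m => [|m IH]; first by rewrite expr0 mul0r addr0 mulr1.
rewrite exprS -natr1.
have : 0 <= (1 - p) ^+ m * (p * p) * (m%:R + 1).
  by rewrite mulr_ge0 ?addr_ge0 ?ler0n // mulr_ge0 ?exprn_ge0 ?subr_ge0 // mulr_ge0.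
move: IH; set a := (1 - p) ^+ m; set n := m%:R.
nra.
Qed.

Lemma exists_expr_lt (R : archiFieldType) (p e : R) :
  0 < p <= 1 -> 0 < e -> exists m, (1 - p) ^+ m < e.
Proof.
case/andP=> p_gt0 p_le1 e_gt0.
have ep_gt0 : 0 < e * p by rewrite mulr_gt0.
have inv_ge0 : 0 <= (e * p)^-1 by rewrite invr_ge0 ltW.
have := archi_boundP inv_ge0; set m := Num.bound _ => m_gt.
exists m; rewrite ltNge; apply/negP => e_le.
have p01 : 0 <= p <= 1 by rewrite ltW.
have := bernoulli_le1 m p01.
have : 1 < m%:R * (e * p) by rewrite -ltr_pdivrMr // mul1r.
have : e * (1 + m%:R * p) <= (1 - p) ^+ m * (1 + m%:R * p).
  by rewrite ler_wpM2r // addr_ge0 // mulr_ge0 // ltW.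
nra.
Qed.

Lemma finite_lower_bound (R : realDomainType) (I : finType) (P : pred I) (f : I -> R) :
  (forall i, P i -> 0 < f i) -> exists2 q, 0 < q <= 1 & forall i, P i -> q <= f i.
Proof.
move=> f_gt0.
have min_gt0 i : P i -> 0 < Num.min (f i) 1 by move=> Pi; rewrite lt_min f_gt0 ?ltr01.
have min_in01 i : P i -> 0 <= Num.min (f i) 1 <= 1.
  by move=> Pi; rewrite ltW ?min_gt0 // ge_min lexx orbT.
exists (\prod_(i | P i) Num.min (f i) 1).
  by rewrite prodr_gt0 ?prodr_ile1.
move=> i Pi; apply: le_trans (_ : Num.min (f i) 1 <= f i); last by rewrite ge_min lexx.
rewrite (bigD1 i) //= ler_piMr ?(ltW (min_gt0 i Pi)) //.
by apply: prodr_ile1 => j /andP[/min_in01].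
Qed.

Lemma mass_gt0_of_expectation (R : realDomainType) (I : finType) (A : pred I)
    (w v : I -> R) c :
  (forall i, 0 <= w i) -> \sum_i w i = 1 ->
  (forall i, ~~ A i -> v i < c) -> c <= \sum_i v i * w i ->
  0 < \sum_(i | A i) w i.
Proof.
move=> w_ge0 w_sum1 v_lt c_le; rewrite lt_def sumr_ge0 // andbT.
apply/eqP => /(psumr_eq0P (fun i _ => w_ge0 i)) wA0.
have term_ge0 i : 0 <= (c - v i) * w i.
  case: (boolP (A i)) => Ai; first by rewrite wA0 ?mulr0.
  by rewrite mulr_ge0 // subr_ge0 ltW ?v_lt.
have terms_sum : \sum_i (c - v i) * w i = c - \sum_i v i * w i.
  by rewrite -[c in RHS]mulr1 -w_sum1 mulr_sumr -sumrB; apply: eq_bigr => i _; rewrite mulrBl.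
have /(psumr_eq0P (fun i _ => term_ge0 i)) term0 : \sum_i (c - v i) * w i = 0.
  by apply/eqP; rewrite eq_le sumr_ge0 // terms_sum subr_le0 c_le.
have : \sum_i w i = 0.
  apply: big1 => i _; case: (boolP (A i)) => Ai; first exact: wA0.
  by apply/eqP; have /eqP := term0 i isT; rewrite mulf_eq0 subr_eq0 gt_eqF ?v_lt.
by rewrite w_sum1 => /eqP; rewrite oner_eq0.
Qed.

Section RankedReachability.
Variables (R : realType) (S M : finType) (delta : S -> M -> M -> S -> R).
Variables (pi1 pi2 : strategy R S M) (X : pred S).
Hypothesis step_ge0 : forall s h t, 0 <= step delta pi1 pi2 s h t.
Hypothesis step_sum1 :
  forall s h, ~~ X (last s h) -> \sum_t step delta pi1 pi2 s h t = 1.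

Local Open Scope classical_set_scope.
Local Notation reach n := (reach_within delta n pi1 pi2 X).

Lemma reach_within_ge0 n s h : 0 <= reach n s h.
Proof.
elim: n h => [|n IH] h /=; case: (X _) => //.
by apply: sumr_ge0 => t _; apply: mulr_ge0.
Qed.

Lemma reach_within_le1 n s h : reach n s h <= 1.
Proof.
elim: n h => [|n IH] h /=; case: ifP => // /negbT Xs.
rewrite -(step_sum1 Xs); apply: ler_sum => t _.
by rewrite ler_piMr.
Qed.

Lemma reach_withinS n s h : reach n.+1 s h = if X (last s h) then 1 else
  \sum_t step delta pi1 pi2 s h t * reach n s (rcons h t).
Proof. by []. Qed.

Lemma reach_within_leS n s h : reach n s h <= reach n.+1 s h.
Proof.
elim: n h => [|n IH] h; rewrite reach_withinS.
  by rewrite [reach 0 s h]/=; case: ifP => // _; apply: sumr_ge0 => t _;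
    rewrite mulr_ge0 ?reach_within_ge0.
by rewrite reach_withinS; case: ifP => // _; apply: ler_sum => t _; rewrite ler_wpM2l.
Qed.

Lemma reach_within_homo m n s h : (m <= n)%N -> reach m s h <= reach n s h.
Proof.
move/subnK <-; elim: (n - m)%N => // d IH.
exact: le_trans IH (reach_within_leS _ _ _).
Qed.

Variables (rank : S -> nat) (N : nat) (q : R).
Hypothesis rank0 : forall x, rank x = 0%N -> X x.
Hypothesis rank_le : forall x, (rank x <= N)%N.
Hypotheses (q_ge0 : 0 <= q) (q_le1 : q <= 1).
Hypothesis rank_decrease : forall s h, ~~ X (last s h) ->
  q <= \sum_(t | (rank t < rank (last s h))%N) step delta pi1 pi2 s h t.

Lemma reach_within_fail_contract n B :
  (forall s h, 1 - reach n s h <= B) ->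
  forall r s h, (rank (last s h) <= r)%N -> 1 - reach (r + n) s h <= B * (1 - q ^+ r).
Proof.
move=> fail_le r; elim: r => [|r IH] s h rank_le_r.
  have Xs : X (last s h) by apply: rank0; apply/eqP; rewrite -leqn0.
  by case: n fail_le => [|n] _ /=; rewrite Xs expr0 !subrr mulr0.
have B_ge0 : 0 <= B by apply: le_trans (fail_le s h); rewrite subr_ge0 reach_within_le1.
rewrite addSn /=; case: ifP => [_|/negbT Xs].
  by rewrite subrr mulr_ge0 // subr_ge0 exprn_ile1.
set x := last s h in rank_le_r Xs *.
set P := \sum_(t | (rank t < rank x)%N) step delta pi1 pi2 s h t.
set Q := \sum_(t | ~~ (rank t < rank x)%N) step delta pi1 pi2 s h t.
have PQ1 : P + Q = 1 by rewrite -(step_sum1 Xs) [in RHS](bigID (fun t => rank t < rank x)%N).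
apply: le_trans (_ : P * (B * (1 - q ^+ r)) + Q * B <= _).
  rewrite -{1}(step_sum1 Xs) -sumrB (bigID (fun t => rank t < rank x)%N) /=.
  rewrite !mulr_suml; apply: lerD; apply: ler_sum => t t_rank;
    rewrite -[X in X - _]mulr1 -mulrBr ler_wpM2l //.
    by apply: IH; rewrite last_rcons -ltnS (leq_trans t_rank).
  apply: le_trans (fail_le s (rcons h t)).
  by rewrite lerD2l lerN2 reach_within_homo // leq_addl.
have := rank_decrease Xs; rewrite -/x -/P exprS.
have : 0 <= B * q ^+ r by rewrite mulr_ge0 ?exprn_ge0.
nra.
Qed.

Lemma reach_within_fail_geometric m s h :
  1 - reach (m * N) s h <= (1 - q ^+ N) ^+ m.
Proof.
elim: m s h => [|m IH] s h; first by rewrite expr0 lerBlDr lerDl reach_within_ge0.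
by rewrite mulSn exprS mulrC; apply: reach_within_fail_contract.
Qed.

Lemma PrReach_eq1_of_rank s : 0 < q -> PrReach delta pi1 pi2 X s = 1.
Proof.
move=> q_gt0; rewrite /PrReach; set E := (A in sup A).
have E_ub : ubound E 1 by move=> _ [n _ <-]; exact: reach_within_le1.
have E_ne : E !=set0 by exists (reach 0 s [::]), 0%N.
apply/eqP; rewrite eq_le ge_sup //= leNgt; apply/negP => supE_lt1.
have qN_in : 0 < q ^+ N <= 1 by rewrite exprn_gt0 ?exprn_ile1.
have gap_gt0 : 0 < 1 - sup E by rewrite subr_gt0.
have [m fail_lt] := exists_expr_lt qN_in gap_gt0.
have : reach (m * N) s [::] <= sup E by apply: ub_le_sup; [exists 1 | exists (m * N)%N].
have := reach_within_fail_geometric m s [::].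
lra.
Qed.

End RankedReachability.

Lemma uniform_selP (R : realType) (S M : finType) (G : S -> {set M}) :
  (forall s, (0 < #|G s|)%N) -> is_selector G (uniform_sel R G).
Proof.
move=> G_ne s; split; last by move=> a /negbTE Ga; rewrite /uniform_sel Ga.
split=> [a|]; first by rewrite /uniform_sel; case: ifP => // _; rewrite invr_ge0 ler0n.
rewrite /uniform_sel -big_mkcond /= sumr_const -[_ *+ _]mulr_natr mulVf //.
by rewrite pnatr_eq0 -lt0n.
Qed.

Section OneStep.
Variables (R : realType) (S M : finType) (delta : S -> M -> M -> S -> R).
Hypothesis delta_distr : forall s a b, is_distr (delta s a b).

Lemma selector_ge0 (G : S -> {set M}) (xi : S -> M -> R) s a :
  is_selector G xi -> 0 <= xi s a.
Proof. by move=> /(_ s) [[]]. Qed.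

Lemma selector_sum1 (G : S -> {set M}) (xi : S -> M -> R) s :
  is_selector G xi -> \sum_a xi s a = 1.
Proof. by move=> /(_ s) [[]]. Qed.

Lemma delta_ge0 s a b t : 0 <= delta s a b t.
Proof. by case: (delta_distr s a b). Qed.

Lemma delta_sum1 s a b : \sum_t delta s a b t = 1.
Proof. by case: (delta_distr s a b). Qed.

Definition next_distr (xi : S -> M -> R) (x : S) (b : M) (t : S) : R :=
  \sum_a xi x a * delta x a b t.

Variables (G1 G2 : S -> {set M}) (xi : S -> M -> R).
Hypothesis xiP : is_selector G1 xi.

Lemma next_distr_ge0 x b t : 0 <= next_distr xi x b t.
Proof.
by apply: sumr_ge0 => a _; rewrite mulr_ge0 ?delta_ge0 ?(selector_ge0 _ _ xiP).
Qed.

Lemma next_distr_sum1 x b : \sum_t next_distr xi x b t = 1.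
Proof.
rewrite exchange_big /= -(selector_sum1 x xiP); apply: eq_bigr => a _.
by rewrite -mulr_sumr delta_sum1 mulr1.
Qed.

Lemma next_distr_absorbing x b :
  (forall a, a \in G1 x -> delta x a b x = 1) -> next_distr xi x b x = 1.
Proof.
move=> absorb; rewrite -(selector_sum1 x xiP); apply: eq_bigr => a _.
case: (boolP (a \in G1 x)) => Ga; first by rewrite absorb ?mulr1.
by case: (xiP x) => _ ->; rewrite ?mul0r.
Qed.

Variables (pi2 : strategy R S M).
Hypothesis pi2P : is_strategy G2 pi2.

Lemma step_memorylessE s h t : step delta (memoryless xi) pi2 s h t =
  \sum_b pi2 s h b * next_distr xi (last s h) b t.
Proof.
rewrite /step exchange_big; apply: eq_bigr => b _.
by rewrite mulr_sumr; apply: eq_bigr => a _; rewrite [_ * pi2 s h b]mulrC -mulrA.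
Qed.

Lemma step_memoryless_ge0 s h t : 0 <= step delta (memoryless xi) pi2 s h t.
Proof.
rewrite step_memorylessE; apply: sumr_ge0 => b _.
by rewrite mulr_ge0 ?next_distr_ge0 //; case: (pi2P s h) => -[].
Qed.

Lemma step_memoryless_sum1 s h : \sum_t step delta (memoryless xi) pi2 s h t = 1.
Proof.
under eq_bigr do rewrite step_memorylessE.
rewrite exchange_big /=; case: (pi2P s h) => -[_ <-] _; apply: eq_bigr => b _.
by rewrite -mulr_sumr next_distr_sum1 mulr1.
Qed.

Lemma step_memoryless_mass_ge (A : pred S) q s h :
  (forall b, b \in G2 (last s h) -> q <= \sum_(t | A t) next_distr xi (last s h) b t) ->
  q <= \sum_(t | A t) step delta (memoryless xi) pi2 s h t.
Proof.
move=> mass_ge; under eq_bigr do rewrite step_memorylessE.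
rewrite exchange_big /=; case: (pi2P s h) => -[pi2_ge0 pi2_sum1] pi2_out.
rewrite -[q]mul1r -pi2_sum1 mulr_suml; apply: ler_sum => b _; rewrite -mulr_sumr.
case: (boolP (b \in G2 (last s h))) => G2b; last by rewrite pi2_out ?mul0r.
by rewrite ler_wpM2l ?mass_ge.
Qed.

End OneStep.

Section Predecessor.
Variables (R : realType) (S M : finType) (G1 G2 : S -> {set M}).
Variables (delta : S -> M -> M -> S -> R).
Hypothesis G1_ne : forall s, (0 < #|G1 s|)%N.
Hypothesis G2_ne : forall s, (0 < #|G2 s|)%N.
Hypothesis delta_distr : forall s a b, is_distr (delta s a b).

Definition is_valuation (v : S -> R) := forall t, 0 <= v t <= 1.

Lemma PreE xi1 xi2 v s : Pre delta xi1 xi2 v s =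
  \sum_b xi2 s b * \sum_t v t * next_distr delta xi1 s b t.
Proof.
rewrite /Pre exchange_big; apply: eq_bigr => b _.
rewrite exchange_big mulr_sumr; apply: eq_bigr => t _.
by rewrite /next_distr !mulr_sumr; apply: eq_bigr => a _; ring.
Qed.

Section FixedSelectors.
Variables (xi1 xi2 : S -> M -> R).
Hypotheses (xi1P : is_selector G1 xi1) (xi2P : is_selector G2 xi2).

Lemma Pre_ge0 v s : (forall t, 0 <= v t) -> 0 <= Pre delta xi1 xi2 v s.
Proof.
move=> v_ge0; rewrite PreE; apply: sumr_ge0 => b _.
rewrite mulr_ge0 ?(selector_ge0 _ _ xi2P) //; apply: sumr_ge0 => t _.
by rewrite mulr_ge0 ?(next_distr_ge0 delta_distr xi1P).
Qed.

Lemma ler_Pre v w s : (forall t, v t <= w t) ->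
  Pre delta xi1 xi2 v s <= Pre delta xi1 xi2 w s.
Proof.
move=> le_vw; rewrite !PreE; apply: ler_sum => b _.
rewrite ler_wpM2l ?(selector_ge0 _ _ xi2P) //; apply: ler_sum => t _.
by rewrite ler_wpM2r ?(next_distr_ge0 delta_distr xi1P).
Qed.

Lemma Pre_cst1 s : Pre delta xi1 xi2 (fun=> 1) s = 1.
Proof.
rewrite PreE -[RHS](selector_sum1 s xi2P); apply: eq_bigr => b _.
under eq_bigr do rewrite mul1r.
by rewrite (next_distr_sum1 delta_distr xi1P) mulr1.
Qed.

Lemma Pre_le1 v s : is_valuation v -> Pre delta xi1 xi2 v s <= 1.
Proof.
by move=> v01; rewrite -(Pre_cst1 s); apply: ler_Pre => t; case/andP: (v01 t).
Qed.

End FixedSelectors.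

Lemma Pre1_with_ge xi1 v s c :
  (forall xi2, is_selector G2 xi2 -> c <= Pre delta xi1 xi2 v s) ->
  c <= Pre1_with delta G2 xi1 v s.
Proof.
move=> c_le; apply: lb_le_inf; last by move=> _ [xi2 xi2P <-]; exact: c_le.
by exists (Pre delta xi1 (uniform_sel R G2) v s); exists (uniform_sel R G2) => //;
  exact: uniform_selP.
Qed.

Lemma Pre1_with_le xi1 xi2 v s : is_selector G1 xi1 -> is_selector G2 xi2 ->
  (forall t, 0 <= v t) -> Pre1_with delta G2 xi1 v s <= Pre delta xi1 xi2 v s.
Proof.
move=> xi1P xi2P v_ge0; apply: ge_inf; last by exists xi2.
by exists 0 => _ [xi xiP <-]; exact: Pre_ge0.
Qed.

Lemma Pre1_with_le_Pre1 xi1 v s : is_selector G1 xi1 -> is_valuation v ->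
  Pre1_with delta G2 xi1 v s <= Pre1 delta G1 G2 v s.
Proof.
move=> xi1P v01; apply: ub_le_sup; last by exists xi1.
exists 1 => _ [xi xiP <-].
have unifP := uniform_selP R G2_ne.
apply: le_trans (Pre1_with_le s xiP unifP _) (Pre_le1 xiP unifP s v01).
by move=> t; case/andP: (v01 t).
Qed.

Lemma Pre1_le v s c :
  (forall xi1, is_selector G1 xi1 -> Pre1_with delta G2 xi1 v s <= c) ->
  Pre1 delta G1 G2 v s <= c.
Proof.
move=> le_c; apply: ge_sup; last by move=> _ [xi1 xi1P <-]; exact: le_c.
by exists (Pre1_with delta G2 (uniform_sel R G1) v s); exists (uniform_sel R G1) => //;
  exact: uniform_selP.
Qed.

Lemma Pre1_valuation v : is_valuation v -> is_valuation (Pre1 delta G1 G2 v).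
Proof.
move=> v01 s; have v_ge0 t : 0 <= v t by case/andP: (v01 t).
have [unif1P unif2P] := (uniform_selP R G1_ne, uniform_selP R G2_ne).
apply/andP; split.
  apply: le_trans (Pre1_with_le_Pre1 s unif1P v01).
  by apply: Pre1_with_ge => xi2 xi2P; exact: Pre_ge0.
apply: Pre1_le => xi1 xi1P.
exact: le_trans (Pre1_with_le s xi1P unif2P v_ge0) (Pre_le1 xi1P unif2P s v01).
Qed.

Lemma le_Pre1 v w s : is_valuation v -> is_valuation w -> (forall t, v t <= w t) ->
  Pre1 delta G1 G2 v s <= Pre1 delta G1 G2 w s.
Proof.
move=> v01 w01 le_vw; apply: Pre1_le => xi1 xi1P.
apply: le_trans (Pre1_with_le_Pre1 s xi1P w01).
apply: Pre1_with_ge => xi2 xi2P.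
apply: le_trans (Pre1_with_le s xi1P xi2P _) (ler_Pre xi1P xi2P s le_vw).
by move=> t; case/andP: (v01 t).
Qed.

(* Plays b at x; the uniform moves elsewhere only make it a selector. *)
Definition dirac_sel (x : S) (b : M) : S -> M -> R :=
  fun y c => if y == x then (c == b)%:R else uniform_sel R G2 y c.

Lemma dirac_selP x b : b \in G2 x -> is_selector G2 (dirac_sel x b).
Proof.
move=> G2b y; rewrite /dirac_sel; case: eqP => [->|_]; last exact: uniform_selP.
split; last by move=> c; case: eqP => // ->; rewrite G2b.
split=> [c|]; first by rewrite ler0n.
by rewrite (bigD1 b) //= eqxx big1 ?addr0 // => c /negbTE ->.
Qed.

Lemma Pre_dirac xi1 x b v :
  Pre delta xi1 (dirac_sel x b) v x = \sum_t v t * next_distr delta xi1 x b t.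
Proof.
rewrite PreE (bigD1 b) //= [X in _ + X]big1 ?addr0 => [|c /negbTE c_neq_b].
  by rewrite /dirac_sel !eqxx mul1r.
by rewrite /dirac_sel eqxx c_neq_b mul0r.
Qed.

Section ValueIteration.
Variable T : {set S}.
Hypothesis T_absorbing : forall s, s \in T ->
  forall a b, a \in G1 s -> b \in G2 s -> delta s a b s = 1.

Local Notation u := (u delta G1 G2 T).

Lemma u_valuation j : is_valuation (u j).
Proof.
elim: j => [|j IH] /=; last exact: Pre1_valuation.
by move=> t; case: ifP; rewrite ?lexx ?ler01.
Qed.

Lemma Pre_u0_ge1 xi1 xi2 s : is_selector G1 xi1 -> is_selector G2 xi2 ->
  s \in T -> 1 <= Pre delta xi1 xi2 (u 0) s.
Proof.
move=> xi1P xi2P Ts; rewrite PreE -{1}(selector_sum1 s xi2P); apply: ler_sum => b _.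
case: (boolP (b \in G2 s)) => G2b; last by case: (xi2P s) => _ ->; rewrite ?mul0r.
rewrite -{1}[xi2 s b]mulr1 ler_wpM2l ?(selector_ge0 _ _ xi2P) //.
rewrite (bigD1 s) //= Ts mul1r (next_distr_absorbing xi1P) => [|a G1a];
  last exact: T_absorbing.
rewrite lerDl sumr_ge0 // => t _.
by rewrite mulr_ge0 ?(next_distr_ge0 delta_distr xi1P) //; case: ifP.
Qed.

Lemma u_leS j s : u j s <= u j.+1 s.
Proof.
elim: j s => [|j IH] s; last exact: le_Pre1 (u_valuation _) (u_valuation _) IH.
rewrite [u 0 s]/=; case: ifP => Ts; last by case/andP: (u_valuation 1 s).
have unif1P := uniform_selP R G1_ne.
apply: le_trans (Pre1_with_le_Pre1 s unif1P (u_valuation 0)).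
by apply: Pre1_with_ge => xi2 xi2P; exact: Pre_u0_ge1.
Qed.

Lemma u_homo i j s : (i <= j)%N -> u i s <= u j s.
Proof.
move/subnK <-; elim: (j - i)%N => // d IH.
exact: le_trans IH (u_leS _ _).
Qed.

Local Notation ell := (ell delta G1 G2 T).

Lemma has_ell k s : has (fun j => u j s == u k s) (iota 0 k.+1).
Proof. by apply/hasP; exists k; rewrite // mem_iota add0n ltnSn. Qed.

Lemma ell_le k s : (ell k s <= k)%N.
Proof. by have := has_ell k s; rewrite has_find size_iota ltnS. Qed.

Lemma u_ell k s : u (ell k s) s = u k s.
Proof.
have := nth_find 0%N (has_ell k s).
by rewrite nth_iota ?add0n ?ltnS ?ell_le // => /eqP.
Qed.

Lemma u_neq_before_ell k s j : (j < ell k s)%N -> u j s != u k s.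
Proof.
move=> lt_j; have := before_find 0%N lt_j.
rewrite nth_iota ?add0n => [/negbT //|].
by rewrite ltnS (leq_trans (ltnW lt_j)) ?ell_le.
Qed.

End ValueIteration.
End Predecessor.

Section RankingArgument.
Variables (R : realType) (S M : finType) (G1 G2 : S -> {set M}).
Variables (delta : S -> M -> M -> S -> R) (T : {set S}) (zeta : nat -> S -> M -> R).
Hypothesis G1_ne : forall s, (0 < #|G1 s|)%N.
Hypothesis G2_ne : forall s, (0 < #|G2 s|)%N.
Hypothesis delta_distr : forall s a b, is_distr (delta s a b).
Hypothesis T_absorbing : forall s, s \in T ->
  forall a b, a \in G1 s -> b \in G2 s -> delta s a b s = 1.
Hypothesis zetaP : forall j, (0 < j)%N ->
  is_selector G1 (zeta j) /\
  (forall s, Pre1_with delta G2 (zeta j) (u delta G1 G2 T j.-1) s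
             = Pre1 delta G1 G2 (u delta G1 G2 T j.-1) s).
Variable k : nat.
Hypothesis u_pred_gt0 :
  forall s, ~~ W2 delta G1 G2 T s -> 0 < u delta G1 G2 T k.-1 s.

Local Notation u := (u delta G1 G2 T).
Local Notation ell := (ell delta G1 G2 T).
Local Notation eta := (eta_sel delta G1 G2 T zeta k).
Local Notation TW := (TW2 delta G1 G2 T).

Lemma eta_selP : is_selector G1 eta.
Proof.
move=> s; rewrite /eta_sel; case: ifP => [/zetaP[zP _] | _]; first exact: zP.
exact: uniform_selP.
Qed.

Definition better (y x : S) :=
  (u k x < u k y) || ((u k y == u k x) && (ell k y < ell k x)%N).

Lemma better_trans y z x : better y z -> better z x -> better y x.
Proof.
rewrite /better => /orP[lt_zy | /andP[/eqP eq_yz lt_yz]] /orP[lt_xz | /andP[/eqP eq_zx lt_zx]].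
- by rewrite (lt_trans lt_xz lt_zy).
- by rewrite -eq_zx lt_zy.
- by rewrite eq_yz lt_xz.
- by rewrite eq_yz eq_zx eqxx (ltn_trans lt_yz lt_zx) orbT.
Qed.

Lemma better_irrefl x : ~~ better x x.
Proof. by rewrite /better ltxx ltnn andbF. Qed.

Lemma ell_gt0 x : ~~ TW x -> (0 < ell k x)%N.
Proof.
rewrite /TW2 negb_or => /andP[Tx W2x].
have uk_gt0 : 0 < u k x.
  apply: lt_le_trans (u_pred_gt0 W2x) _.
  exact: (u_homo G1_ne G2_ne delta_distr T_absorbing x (leq_pred k)).
rewrite lt0n; apply/negP => /eqP ell0; move: uk_gt0.
by rewrite -(u_ell G1 G2 delta T k x) ell0 /= (negbTE Tx) ltxx.
Qed.

Lemma u_pred_ell_lt x t : (0 < ell k x)%N -> ~~ better t x -> u (ell k x).-1 t < u k x.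
Proof.
move=> ell_x_gt0; rewrite /better negb_or negb_and -leNgt => /andP[le_tx ne_or_ge].
have le_pred : u (ell k x).-1 t <= u k t.
  apply: (u_homo G1_ne G2_ne delta_distr T_absorbing).
  exact: leq_trans (leq_pred _) (ell_le G1 G2 delta T k x).
case: (ltgtP (u k t) (u k x)) le_tx ne_or_ge => // [lt_tx | eq_tx] _ ell_ge.
  exact: le_lt_trans le_pred lt_tx.
rewrite /= -leqNgt in ell_ge.
rewrite -eq_tx lt_neqAle le_pred andbT; apply: u_neq_before_ell.
by apply: leq_trans ell_ge; rewrite prednK.
Qed.

Lemma u_le_next_expectation x b : ~~ TW x -> b \in G2 x ->
  u k x <= \sum_t u (ell k x).-1 t * next_distr delta eta x b t.
Proof.
move=> TWx G2b; have j_gt0 := ell_gt0 TWx; have [zP zeta_opt] := zetaP j_gt0.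
have eta_x : eta x = zeta (ell k x) x by rewrite /eta_sel j_gt0.
(* ζ_j is optimal for u_(j-1), so even against the Dirac reply b it secures
   Pre1 (u_(j-1)) x = u_j x = u_k x. *)
have u_j : u (ell k x) x = Pre1 delta G1 G2 (u (ell k x).-1) x.
  by rewrite -[in LHS](prednK j_gt0).
rewrite -(u_ell G1 G2 delta T k x) u_j -zeta_opt /next_distr eta_x -(Pre_dirac G2).
apply: (Pre1_with_le delta_distr x zP (dirac_selP R G2_ne G2b)) => t.
by have /andP[] := u_valuation G1_ne G2_ne delta_distr T (ell k x).-1 t.
Qed.

Lemma better_mass_gt0 x b : ~~ TW x -> b \in G2 x ->
  0 < \sum_(t | better t x) next_distr delta eta x b t.
Proof.
move=> TWx G2b.
apply: (mass_gt0_of_expectation _ _ _ (u_le_next_expectation TWx G2b)).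
- exact: (next_distr_ge0 delta_distr eta_selP x b).
- exact: (next_distr_sum1 delta_distr eta_selP x b).
- by move=> t; apply: u_pred_ell_lt; exact: ell_gt0.
Qed.

Definition rank x := if TW x then 0%N else #|[set y | ~~ TW y && better y x]|.+1.

Lemma rank0_TW x : rank x = 0%N -> TW x.
Proof. by rewrite /rank; case: ifP. Qed.

Lemma rank_le x : (rank x <= #|S|.+1)%N.
Proof. by rewrite /rank; case: ifP => // _; rewrite ltnS max_card. Qed.

Lemma rank_better_lt x t : ~~ TW x -> better t x -> (rank t < rank x)%N.
Proof.
move=> TWx better_tx; rewrite /rank (negbTE TWx); case: ifP => // TWt; rewrite ltnS.
apply: proper_card; apply/properP; split.
  apply/fintype.subsetP => y; rewrite !inE => /andP[-> better_yt] /=.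
  exact: better_trans better_yt better_tx.
by exists t; rewrite !inE ?TWt ?better_tx ?better_irrefl ?andbF.
Qed.

Lemma exists_better_mass_lb : exists2 q, 0 < q <= 1 &
  forall x b, ~~ TW x -> b \in G2 x -> q <= \sum_(t | better t x) next_distr delta eta x b t.
Proof.
pose P (p : S * M) := ~~ TW p.1 && (p.2 \in G2 p.1).
have [q q01 q_le] : exists2 q, 0 < q <= 1 &
    forall p, P p -> q <= \sum_(t | better t p.1) next_distr delta eta p.1 p.2 t.
  by apply: finite_lower_bound => -[x b] /andP[]; exact: better_mass_gt0.
by exists q => // x b TWx G2b; apply: (q_le (x, b)); rewrite /P TWx G2b.
Qed.

Lemma PrReach_eta_eq1 pi2 s : is_strategy G2 pi2 ->
  PrReach delta (memoryless eta) pi2 TW s = 1.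
Proof.
move=> pi2P; have [q /andP[q_gt0 q_le1] q_le] := exists_better_mass_lb.
have step_ge0 := step_memoryless_ge0 delta_distr eta_selP pi2P.
apply: (PrReach_eq1_of_rank step_ge0 _ rank0_TW rank_le (ltW q_gt0) q_le1) => //.
  by move=> s' h _; exact: (step_memoryless_sum1 delta_distr eta_selP pi2P).
move=> s' h TWx; set x := last s' h in TWx *.
apply: le_trans (_ : q <= \sum_(t | better t x) step delta (memoryless eta) pi2 s' h t) _.
  by apply: (step_memoryless_mass_ge pi2P) => b G2b; exact: q_le.
rewrite big_mkcond [X in _ <= X]big_mkcond; apply: ler_sum => t _.
case: ifP => better_tx; first by rewrite rank_better_lt.
by case: ifP.
Qed.

End RankingArgument.

Theorem lemma5 (R : realType) (S M : finType) (G1 G2 : S -> {set M})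
    (delta : S -> M -> M -> S -> R) (T : {set S}) (zeta : nat -> S -> M -> R) :
  (forall s, (0 < #|G1 s|)%N) ->
  (forall s, (0 < #|G2 s|)%N) ->
  (forall s a b, is_distr (delta s a b)) ->
  (forall s, TW2 delta G1 G2 T s ->
     forall a b, a \in G1 s -> b \in G2 s -> delta s a b s = 1) ->
  (forall j, (0 < j)%N ->
     is_selector G1 (zeta j) /\
     (forall s, Pre1_with delta G2 (zeta j) (u delta G1 G2 T j.-1) s
                = Pre1 delta G1 G2 (u delta G1 G2 T j.-1) s)) ->
  forall k : nat,
    (forall s, ~~ W2 delta G1 G2 T s -> 0 < u delta G1 G2 T k.-1 s) ->
    forall pi2, is_strategy G2 pi2 ->
    forall s, PrReach delta (memoryless (eta_sel delta G1 G2 T zeta k)) pi2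
                      (TW2 delta G1 G2 T) s = 1.
Proof.
move=> G1_ne G2_ne delta_distr TW_absorbing zetaP k u_pred_gt0 pi2 pi2P s.
have T_absorbing s' : s' \in T ->
    forall a b, a \in G1 s' -> b \in G2 s' -> delta s' a b s' = 1.
  by move=> Ts'; apply: TW_absorbing; rewrite /TW2 Ts'.
exact: (PrReach_eta_eq1 G1_ne G2_ne delta_distr T_absorbing zetaP u_pred_gt0 s pi2P).
Qed.
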